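(* Let $k$ be a divisor of $n$ and let $X_k$ be the set of unordered partitions of $\{1,\dots,n\}$ into $k$ cells each of size $n/k$, with the natural action of $S_n$. If $\pi\in S_n$ has $c$ cycles, then the number of elements of $X_k$ fixed by $\pi$ is at most $k^c$. *)

From mathcomp Require Import all_boot all_fingroup.
Set Implicit Arguments. Unset Strict Implicit. Unset Printing Implicit Defensive.

Definition equipartitions (n k : nat) : {set {set {set 'I_n}}} :=
  [set P : {set {set 'I_n}} | [&& partition P [set: 'I_n], #|P| == k
                                 & [forall B in P, #|B| == n %/ k]]].

Definition perm_act_partition (n : nat) (pi : 'S_n) (P : {set {set 'I_n}})
  : {set {set 'I_n}} := [set [set pi x | x in B] | B : {set 'I_n} in P].

(* number of cycles of pi (including fixed points) *)
Definition ncycles (n : nat) (pi : 'S_n) : nat := #|porbits pi|.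

From mathcomp Require Import all_boot all_fingroup.

Set Implicit Arguments. Unset Strict Implicit. Unset Printing Implicit Defensive.

(* Double counting.  A partition P fixed by pi, with k cells, has k! labelings
   f : 'I_n -> 'I_k whose fibres are its cells; as pi permutes the cells of P,
   each of them satisfies f \o pi = s \o f for some s in 'S_k.  For a given s,
   such an f is determined by its values on one point of each of the c cycles
   of pi, so there are at most k ^ c of them.  Hence k! times the number of
   fixed partitions is at most k! * k ^ c. *)

Lemma leq_card_ffun_determined (T U : finType)
    (S : {set {ffun T -> U}}) (A : {set T}) :
  {in S &, forall f g : {ffun T -> U}, {in A, f =1 g} -> f = g} ->
  #|S| <= #|U| ^ #|A|.
Proof.
move=> detS; pose res (f : {ffun T -> U}) := [ffun a : {x | x \in A} => f (val a)].
have res_inj : {in S &, injective res}.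
  move=> f g Sf Sg /ffunP eq_res; apply: detS => // x Ax.
  by have := eq_res (exist _ x Ax); rewrite !ffunE.
rewrite -(card_in_imset res_inj) -[#|A|]card_sig -card_ffun; exact: max_card.
Qed.

Lemma leq_card_exists (I T : finType) (R : I -> pred T) :
  #|[set x | [exists i, R i x]]| <= \sum_i #|[set x | R i x]|.
Proof.
rewrite -sum1dep_card big_mkcond /=.
under [X in _ <= X]eq_bigr do rewrite -sum1dep_card big_mkcond /=.
rewrite exchange_big /=; apply: leq_sum => x _.
case: existsP => // -[i Rix].
by rewrite (bigD1 i) //= Rix leq_addr.
Qed.

Lemma leq_mul_card_fibers (aT rT : finType) (f : aT -> rT)
    (A : {set aT}) (B : {set rT}) m :
  {in B, forall y, m <= #|[set x in A | f x == y]|} -> m * #|B| <= #|A|.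
Proof.
move=> fiberB; rewrite mulnC -sum_nat_const.
apply: (@leq_trans (\sum_(y in B) #|[set x in A | f x == y]|)).
  exact: leq_sum.
have -> : \sum_(y in B) #|[set x in A | f x == y]| = #|[set x in A | f x \in B]|.
  rewrite -sum1dep_card (partition_big f (mem B)) /=; last by move=> x /andP[].
  apply: eq_bigr => y By; rewrite sum1dep_card; apply: eq_card => x.
  by rewrite !inE; case: (f x =P y) => [->|]; rewrite ?andbF ?By ?andbT.
by apply: subset_leq_card; apply/subsetP => x; rewrite inE => /andP[].
Qed.

Lemma porbits_partition (T : finType) (pi : {perm T}) : partition (porbits pi) [set: T].
Proof.
have -> : porbits pi = equivalence_partition (fun x y => y \in porbit pi x) [set: T].
  by apply/setP => B; apply/imsetP/imsetP => -[x _ ->]; exists x => //;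
     apply/setP => y; rewrite !inE.
apply: equivalence_partitionP => x y z _ _ _; split; first exact: porbit_id.
by rewrite -eq_porbit_mem => /eqP ->.
Qed.

Section Equivariance.

Variables (T U : finType) (pi : {perm T}) (s : {perm U}).

Definition equivariant (f : T -> U) : bool := [forall x, f (pi x) == s (f x)].

Lemma equivariant_expg f i x :
  equivariant f -> f ((pi ^+ i)%g x) = ((s ^+ i)%g) (f x).
Proof.
move/forallP => fpi; elim: i x => [|i IHi] x; first by rewrite !expg0 !perm1.
by rewrite !expgSr !permM (eqP (fpi _)) IHi.
Qed.

Lemma leq_card_equivariant :
  #|[set f : {ffun T -> U} | equivariant f]| <= #|U| ^ #|porbits pi|.
Proof.
have trX := transversalP (porbits_partition pi).
rewrite -(card_transversal trX); apply: leq_card_ffun_determined => f g.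
rewrite !inE => fpi gpi eq_fg; apply/ffunP => x.
pose r := transversal_repr x (transversal (porbits pi) [set: T]) (porbit pi x).
have orbit_x : porbit pi x \in porbits pi by apply: imset_f.
have /porbitP[i ->] : x \in porbit pi r.
  by rewrite porbit_sym (repr_mem_pblock trX).
by rewrite !equivariant_expg // eq_fg // (repr_mem_transversal trX).
Qed.

End Equivariance.

Lemma equivariant_exists (T U : finType) (pi : {perm T}) (g : T -> U) :
  (forall u, exists x, g x = u) ->
  (forall x y, (g (pi x) == g (pi y)) = (g x == g y)) ->
  exists s : {perm U}, equivariant pi s g.
Proof.
move=> g_onto g_pi; have [sec secK] := fin_all_exists g_onto.
have s_inj : injective (fun u => g (pi (sec u))).
  by move=> u v /eqP; rewrite g_pi !secK => /eqP.
by exists (perm s_inj); apply/forallP => x; rewrite permE /= g_pi secK.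
Qed.

Lemma eq_preim_partition (T : finType) (rT1 rT2 : eqType)
    (f1 : T -> rT1) (f2 : T -> rT2) (D : {set T}) :
  (forall x y, (f1 x == f1 y) = (f2 x == f2 y)) ->
  preim_partition f1 D = preim_partition f2 D.
Proof. by move=> eq_f; apply: eq_imset => x; apply/setP => y; rewrite !inE eq_f. Qed.

Section Labelings.

Variables (T : finType) (P : {set {set T}}).
Hypothesis partP : partition P [set: T].

Lemma pblock_in_partition x : pblock P x \in P.
Proof. by case/and3P: partP => /eqP coverP _ _; rewrite pblock_mem // coverP. Qed.

Lemma labeling_exists :
  exists g : T -> 'I_#|P|,
    (forall i, exists x, g x = i) /\
    forall x y, (g x == g y) = (pblock P x == pblock P y).
Proof.
have [_ trivP P0] := and3P partP; have memP := pblock_in_partition.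
exists (fun x => enum_rank_in (memP x) (pblock P x)); split => [i | x y].
  have PBi : enum_val i \in P := enum_valP i.
  have /set0Pn[x Bx] : enum_val i != set0 by apply: contraNneq P0 => <-.
  exists x; rewrite (eq_enum_rank_in (memP x) PBi) ?memP //.
  by rewrite (def_pblock trivP PBi Bx) enum_valK_in.
apply/eqP/eqP => [/enum_rank_in_inj-> // | eqB]; rewrite ?memP //.
by rewrite (eq_enum_rank_in (memP x) (memP y)) ?memP // eqB.
Qed.

Variable pi : {perm T}.
Hypothesis stableP : [set [set pi x | x in B] | B : {set T} in P] = P.

Lemma pblock_perm x : pblock P (pi x) = pi @: pblock P x.
Proof.
have [/eqP coverP trivP _] := and3P partP.
apply: def_pblock => //; first by rewrite -{2}stableP imset_f ?pblock_in_partition.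
by rewrite imset_f // mem_pblock coverP.
Qed.

Lemma fact_leq_card_labelings k : #|P| = k ->
  k`! <= #|[set f : {ffun T -> 'I_k} |
             [exists s, equivariant pi s f] & preim_partition f [set: T] == P]|.
Proof.
move=> <-; have [g [g_onto g_pblock]] := labeling_exists.
have g_pi x y : (g (pi x) == g (pi y)) = (g x == g y).
  by rewrite !g_pblock !pblock_perm (inj_eq (imset_inj perm_inj)).
have [s g_s] := equivariant_exists g_onto g_pi.
pose relabel (t : {perm 'I_#|P|}) := [ffun x => t (g x)].
have relabel_inj : injective relabel.
  move=> t1 t2 /ffunP eq_t; apply/permP => i; have [x <-] := g_onto i.
  by have := eq_t x; rewrite !ffunE.
rewrite -card_Sn -(card_imset _ relabel_inj); apply/subset_leq_card/subsetP.
move=> _ /imsetP[t _ ->]; rewrite inE; apply/andP; split.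
  apply/existsP; exists (t^-1 * s * t)%g; apply/forallP => x.
  by rewrite !ffunE (eqP (forallP g_s x)) !permM permK.
apply/eqP/(etrans _ (preim_partition_pblock partP))/eq_preim_partition => x y.
by rewrite !ffunE (inj_eq perm_inj) g_pblock.
Qed.

End Labelings.

Theorem lemma4p3 (n k : nat) (hk : k %| n) (pi : 'S_n) :
  #|[set P in equipartitions n k | perm_act_partition pi P == P]|
    <= k ^ ncycles pi.
Proof.
set Fix := [set P in _ | _].
pose E := [set f : {ffun 'I_n -> 'I_k} | [exists s, equivariant pi s f]].
have fibers : {in Fix, forall P,
    k`! <= #|[set f in E | preim_partition f [set: 'I_n] == P]|}.
  move=> P; rewrite !inE => /andP[/and3P[partP /eqP cardP _] /eqP stableP].
  apply: leq_trans (fact_leq_card_labelings partP stableP cardP) _.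
  by apply/subset_leq_card/subsetP => f; rewrite !inE.
have union : #|E| <= k`! * k ^ ncycles pi.
  apply: leq_trans (leq_card_exists _) _.
  rewrite -card_Sn -sum_nat_const leq_sum // => s _.
  by rewrite -[k in k ^ _]card_ord leq_card_equivariant.
have := leq_trans (leq_mul_card_fibers fibers) union.
by rewrite leq_pmul2l ?fact_gt0.
Qed.
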